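(* For every finitely generated group $G$ there is an exact sequence $1\to Z(RF(G))\to RF(G)\to RF_{na}(G)\to 1$, where the map $RF(G)\to RF_{na}(G)$ is the natural projection. In particular, $G$ is residually non-abelian free if and only if $G$ is residually free and $Z(G)=1$.
   Context: $\mathbb F$ denotes a non-abelian free group. $RF(G)$ is the quotient of $G$ by the intersection of the kernels of all homomorphisms $G\to\mathbb F$; $RF_{na}(G)$ is the quotient of $G$ by the intersection of the kernels of all homomorphisms $G\to\mathbb F$ with non-abelian image (so $RF_{na}(G)$ is a quotient of $RF(G)$). $G$ is residually free if $G=RF(G)$ (i.e. the natural map $G\to RF(G)$ is injective), and residually non-abelian free if $G=RF_{na}(G)$. $Z(H)$ is the center of $H$. *)

From Stdlib Require Import List.
Import ListNotations.

Record Group := {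
  carrier :> Type;
  gmul : carrier -> carrier -> carrier;
  gone : carrier;
  ginv : carrier -> carrier;
  gmul_assoc : forall x y z, gmul x (gmul y z) = gmul (gmul x y) z;
  gmul_1l : forall x, gmul gone x = x;
  gmul_1r : forall x, gmul x gone = x;
  gmul_Vl : forall x, gmul (ginv x) x = gone;
  gmul_Vr : forall x, gmul x (ginv x) = gone
}.

Arguments gmul {g}.
Arguments gone {g}.
Arguments ginv {g}.

Record Hom (G H : Group) := {
  hmap :> G -> H;
  hmap_mul : forall x y, hmap (gmul x y) = gmul (hmap x) (hmap y)
}.
Arguments hmap {G H}.

Inductive in_gen (G : Group) (S : list G) : G -> Prop :=
| gen_one : in_gen G S gone
| gen_elt : forall s, In s S -> in_gen G S s
| gen_inv : forall x, in_gen G S x -> in_gen G S (ginv x)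
| gen_mul : forall x y, in_gen G S x -> in_gen G S y -> in_gen G S (gmul x y).

Definition finitely_generated (G : Group) : Prop :=
  exists S : list G, forall g : G, in_gen G S g.

Definition is_free_on (F : Group) (X : Type) (i : X -> F) : Prop :=
  forall (H : Group) (f : X -> H),
    exists phi : Hom F H,
      (forall x, phi (i x) = f x) /\
      (forall psi : Hom F H, (forall x, psi (i x) = f x) -> forall y, psi y = phi y).

Definition abelian (G : Group) : Prop := forall x y : G, gmul x y = gmul y x.

Definition nonabelian_free (F : Group) : Prop :=
  (exists (X : Type) (i : X -> F), is_free_on F X i) /\ ~ abelian F.

Definition nonab_image {G F : Group} (phi : Hom G F) : Prop :=
  exists x y : G, gmul (phi x) (phi y) <> gmul (phi y) (phi x).

(* RF(G) realised concretely as the image of G in the product of copies of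
   F indexed by all homomorphisms G -> F (this image is canonically
   G / (intersection of all kernels)).  Similarly RF_na(G) is the image of G
   in the product indexed by homomorphisms with non-abelian image.        *)

Definition nonabHom (G F : Group) := { phi : Hom G F | nonab_image phi }.

Definition rf_map (G F : Group) (g : G) : Hom G F -> F := fun phi => phi g.
Definition rfna_map (G F : Group) (g : G) : nonabHom G F -> F :=
  fun p => proj1_sig p g.

Definition in_RF (G F : Group) (x : Hom G F -> F) : Prop :=
  exists g : G, x = rf_map G F g.
Definition in_RFna (G F : Group) (y : nonabHom G F -> F) : Prop :=
  exists g : G, y = rfna_map G F g.

Definition pmul {I : Type} {F : Group} (x y : I -> F) : I -> F :=
  fun i => gmul (x i) (y i).
Definition pone {I : Type} {F : Group} : I -> F := fun _ => gone.

Definition rf_proj (G F : Group) (x : Hom G F -> F) : nonabHom G F -> F :=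
  fun p => x (proj1_sig p).

Definition in_Z_RF (G F : Group) (x : Hom G F -> F) : Prop :=
  in_RF G F x /\ forall y, in_RF G F y -> pmul x y = pmul y x.

Definition residually_free (G F : Group) : Prop :=
  forall g h : G, rf_map G F g = rf_map G F h -> g = h.
Definition residually_nonab_free (G F : Group) : Prop :=
  forall g h : G, rfna_map G F g = rfna_map G F h -> g = h.

Definition trivial_center (G : Group) : Prop :=
  forall z : G, (forall g : G, gmul z g = gmul g z) -> z = gone.

From Stdlib Require Import List Arith Lia Classical ClassicalEpsilon FunctionalExtensionality ProofIrrelevance.
Import ListNotations.

(* The only property of F that matters is commutative transitivity (CT): if
   z <> 1 commutes with a and b, then a and b commute.  Given CT, a coordinate
   of an element of RF(G) at a homomorphism with abelian image commutes with
   everything, while at a homomorphism with non-abelian image a central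
   coordinate centralises a non-abelian subgroup and hence is 1.

   CT of free groups is proved via reduced words.  A group free on X embeds, by
   its universal property, in the group of reduced words on X, and CT passes
   to subgroups.  There, z <> 1 is conjugate to a cyclically reduced word c; an
   element commuting with c has it, or its inverse, commuting with c as a
   plain word (no cancellation occurs); in a free monoid, commuting words are
   powers of a common root, so commuting with a non-empty c is transitive; and
   words commuting with c multiply without cancellation. *)

Lemma g_cancel_l (G : Group) (x y z : G) : gmul x y = gmul x z -> y = z.
Proof.
  intros H. rewrite <- (gmul_1l G y), <- (gmul_1l G z), <- (gmul_Vl G x).
  rewrite <- !gmul_assoc, H; reflexivity.
Qed.

Lemma g_cancel_r (G : Group) (x y z : G) : gmul y x = gmul z x -> y = z.
Proof.
  intros H. rewrite <- (gmul_1r G y), <- (gmul_1r G z), <- (gmul_Vr G x).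
  rewrite !gmul_assoc, H; reflexivity.
Qed.

Lemma g_inv_unique (G : Group) (x y : G) : gmul x y = gone -> y = ginv x.
Proof. intros H. apply (g_cancel_l G x). rewrite H, gmul_Vr; reflexivity. Qed.

Lemma g_inv_mul (G : Group) (x y : G) : ginv (gmul x y) = gmul (ginv y) (ginv x).
Proof.
  symmetry; apply g_inv_unique.
  rewrite <- gmul_assoc, (gmul_assoc G y), gmul_Vr, gmul_1l, gmul_Vr; reflexivity.
Qed.

Lemma g_inv_inv (G : Group) (x : G) : ginv (ginv x) = x.
Proof. symmetry; apply g_inv_unique, gmul_Vl. Qed.

Lemma g_inv_one (G : Group) : ginv (@gone G) = gone.
Proof. symmetry; apply g_inv_unique, gmul_1l. Qed.

Lemma hom_one (G H : Group) (f : Hom G H) : f gone = gone.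
Proof.
  apply (g_cancel_l H (f gone)). rewrite <- hmap_mul, !gmul_1l, gmul_1r; reflexivity.
Qed.

Lemma hom_inv (G H : Group) (f : Hom G H) (x : G) : f (ginv x) = ginv (f x).
Proof. apply g_inv_unique. rewrite <- hmap_mul, gmul_Vr; apply hom_one. Qed.

Definition idHom (G : Group) : Hom G G := {| hmap := fun x => x; hmap_mul := fun _ _ => eq_refl |}.

Definition compHom {A B C : Group} (g : Hom B C) (f : Hom A B) : Hom A C.
Proof. refine {| hmap := fun x => g (f x) |}. intros; rewrite !hmap_mul; reflexivity. Defined.

Definition comm {G : Group} (x y : G) : Prop := gmul x y = gmul y x.

Lemma comm_sym (G : Group) (x y : G) : comm x y -> comm y x.
Proof. unfold comm; auto. Qed.

Lemma comm_inv (G : Group) (x y : G) : comm x y -> comm x (ginv y).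
Proof.
  unfold comm; intros H. apply (g_cancel_l G y). apply (g_cancel_r G y).
  rewrite !gmul_assoc, gmul_Vr, gmul_1l, <- !gmul_assoc, gmul_Vl, gmul_1r. auto.
Qed.

Lemma comm_inv_iff (G : Group) (x y : G) : comm x (ginv y) <-> comm x y.
Proof.
  split; [|apply comm_inv]. intros H. rewrite <- (g_inv_inv G y). now apply comm_inv.
Qed.

Definition conjg {G : Group} (u x : G) : G := gmul (ginv u) (gmul x u).

Lemma conjg_mul (G : Group) (u x y : G) : conjg u (gmul x y) = gmul (conjg u x) (conjg u y).
Proof.
  unfold conjg. rewrite !gmul_assoc. f_equal. rewrite <- !gmul_assoc. f_equal. f_equal.
  rewrite gmul_assoc, gmul_Vr, gmul_1l; reflexivity.
Qed.

Lemma conjg_inj (G : Group) (u x y : G) : conjg u x = conjg u y -> x = y.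
Proof. unfold conjg; intros H. apply g_cancel_l in H. apply g_cancel_r in H. auto. Qed.

Lemma comm_conjg_iff (G : Group) (u x y : G) : comm (conjg u x) (conjg u y) <-> comm x y.
Proof.
  unfold comm; rewrite <- !conjg_mul. split; [apply conjg_inj | intros ->; reflexivity].
Qed.

Lemma conjg_conjugate (G : Group) (u c : G) : conjg u (gmul u (gmul c (ginv u))) = c.
Proof.
  unfold conjg. rewrite !gmul_assoc, gmul_Vl, gmul_1l, <- gmul_assoc, gmul_Vl, gmul_1r; reflexivity.
Qed.

Lemma comm_inv_iff_l (G : Group) (x y : G) : comm (ginv x) y <-> comm x y.
Proof. split; intros H; apply comm_sym, comm_inv_iff, comm_sym; exact H. Qed.

Lemma conjugate_by_one (G : Group) (z : G) : z = gmul gone (gmul z (ginv gone)).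
Proof. rewrite g_inv_one, gmul_1l, gmul_1r; reflexivity. Qed.

Lemma conjugate_conjugate (G : Group) (l u c : G) :
  gmul l (gmul (gmul u (gmul c (ginv u))) (ginv l)) = gmul (gmul l u) (gmul c (ginv (gmul l u))).
Proof. rewrite g_inv_mul, !gmul_assoc. reflexivity. Qed.

Definition comm_transitive (F : Group) : Prop :=
  forall z a b : F, z <> gone -> comm z a -> comm z b -> comm a b.

Lemma comm_transitive_inj (A B : Group) (f : Hom A B) :
  (forall x y, f x = f y -> x = y) -> comm_transitive B -> comm_transitive A.
Proof.
  intros Hinj HB z a b Hz Ha Hb. apply Hinj. rewrite !hmap_mul.
  apply (HB (f z)).
  - intros E. apply Hz, Hinj. now rewrite E, hom_one.
  - unfold comm; rewrite <- !hmap_mul; congruence.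
  - unfold comm; rewrite <- !hmap_mul; congruence.
Qed.

Section FreeMonoid.
Context {A : Type}.

Fixpoint word_pow (t : list A) (n : nat) : list A :=
  match n with 0 => [] | S n => t ++ word_pow t n end.

Lemma word_pow_add (t : list A) m n : word_pow t (m + n) = word_pow t m ++ word_pow t n.
Proof. induction m; simpl; auto. rewrite IHm, app_assoc; auto. Qed.

Lemma word_pow_comm (x y : list A) m : x ++ y = y ++ x -> word_pow x m ++ y = y ++ word_pow x m.
Proof.
  intros H; induction m; simpl. rewrite app_nil_r; auto.
  rewrite <- app_assoc, IHm, !app_assoc, H; auto.
Qed.

Lemma firstn_app_le (a b : list A) n : n <= length a -> firstn n (a ++ b) = firstn n a.
Proof.
  intros H. rewrite firstn_app. replace (n - length a) with 0 by lia.
  rewrite firstn_O, app_nil_r; auto.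
Qed.

Lemma comm_prefix (u v : list A) : u ++ v = v ++ u -> length u <= length v ->
  v = u ++ skipn (length u) v.
Proof.
  intros H Hl. rewrite <- (firstn_skipn (length u) v) at 1. f_equal.
  assert (E := f_equal (firstn (length u)) H).
  rewrite firstn_app, Nat.sub_diag, firstn_O, app_nil_r, firstn_all in E.
  rewrite firstn_app_le in E by exact Hl. auto.
Qed.

Lemma comm_remainder (u v : list A) : u ++ v = v ++ u -> length u <= length v ->
  u ++ skipn (length u) v = skipn (length u) v ++ u.
Proof.
  intros H Hl. pose proof (comm_prefix u v H Hl) as Ev.
  rewrite Ev, <- app_assoc in H. apply app_inv_head in H. exact H.
Qed.

(* Lyndon-Schuetzenberger: commuting words are powers of a common word.
   Euclid's algorithm on lengths, by induction on |u| + |v|. *)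
Lemma comm_common_root : forall n (u v : list A), length u + length v <= n ->
  u ++ v = v ++ u -> exists t m k, u = word_pow t m /\ v = word_pow t k.
Proof.
  induction n as [|n IH]; intros u v Hn H.
  - destruct u, v; simpl in *; try lia. exists [], 0, 0; auto.
  - destruct u as [|a u']; [exists v, 0, 1; simpl; rewrite app_nil_r; auto |].
    destruct v as [|b v']; [exists (a :: u'), 1, 0; simpl; rewrite app_nil_r; auto |].
    destruct (le_lt_dec (length (a :: u')) (length (b :: v'))) as [Hl|Hl].
    + pose proof (comm_prefix _ _ H Hl) as Ev.
      destruct (IH (a :: u') (skipn (length (a :: u')) (b :: v'))) as [t [m [k [E1 E2]]]].
      * rewrite length_skipn; simpl in *; lia.
      * apply comm_remainder; auto.
      * exists t, m, (m + k). split; auto. rewrite Ev, word_pow_add, <- E1, <- E2; auto.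
    + assert (Hl' : length (b :: v') <= length (a :: u')) by lia.
      pose proof (comm_prefix _ _ (eq_sym H) Hl') as Eu.
      destruct (IH (b :: v') (skipn (length (b :: v')) (a :: u'))) as [t [m [k [E1 E2]]]].
      * rewrite length_skipn; simpl in *; lia.
      * apply comm_remainder; auto.
      * exists t, (m + k), m. split; auto. rewrite Eu, word_pow_add, <- E1, <- E2; auto.
Qed.

(* Case |y| <= |x| of the next lemma: y is a prefix of x, and comparing the
   prefixes of length |x| + |y| of x^n y = y x^n gives x y = y x. *)
Lemma pow_eq_comm_le (x y : list A) n m : length y <= length x -> 1 <= n -> 1 <= m ->
  word_pow x n = word_pow y m -> x ++ y = y ++ x.
Proof.
  intros Hl Hn Hm H.
  destruct n as [|n]; [lia|]. destruct m as [|m]; [lia|].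
  assert (Hy : firstn (length y) x = y).
  { assert (E := f_equal (firstn (length y)) H). simpl in E.
    rewrite !firstn_app_le in E by lia. rewrite firstn_all in E; auto. }
  assert (H2 : word_pow x (S n) ++ y = y ++ word_pow x (S n)).
  { rewrite H. apply (word_pow_comm y y (S m)); reflexivity. }
  assert (E := f_equal (firstn (length x + length y)) H2).
  simpl in E. rewrite <- app_assoc in E. rewrite firstn_app_2 in E.
  rewrite (Nat.add_comm (length x)), firstn_app_2, (firstn_app_le x (word_pow x n)),
    firstn_all in E by lia.
  assert (Hf : firstn (length y) (word_pow x n ++ y) = y).
  { destruct n as [|n]; simpl.
    - rewrite firstn_all; auto.
    - rewrite <- app_assoc, firstn_app_le by lia. auto. }
  rewrite Hf in E. auto.
Qed.

Lemma pow_eq_comm (x y : list A) n m : 1 <= n -> 1 <= m ->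
  word_pow x n = word_pow y m -> x ++ y = y ++ x.
Proof.
  intros Hn Hm H. destruct (le_lt_dec (length y) (length x)).
  - apply (pow_eq_comm_le x y n m); auto.
  - symmetry; apply (pow_eq_comm_le y x m n); auto; lia.
Qed.

Lemma monoid_comm_transitive (c p q : list A) : c <> [] -> p ++ c = c ++ p ->
  q ++ c = c ++ q -> p ++ q = q ++ p.
Proof.
  intros Hc H1 H2.
  destruct (comm_common_root _ p c (le_n _) H1) as [t [m [n [E1 E2]]]].
  destruct (comm_common_root _ q c (le_n _) H2) as [s [k [l [E3 E4]]]].
  assert (1 <= n) by (destruct n; [rewrite E2 in Hc; simpl in Hc; congruence | lia]).
  assert (1 <= l) by (destruct l; [rewrite E4 in Hc; simpl in Hc; congruence | lia]).
  assert (Hts : t ++ s = s ++ t) by (apply (pow_eq_comm t s n l); congruence).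
  subst p q. apply word_pow_comm. symmetry. apply word_pow_comm. auto.
Qed.

End FreeMonoid.

Section ReducedWords.
Context {X : Type}.

(* A letter (x, true) stands for the generator x, (x, false) for its inverse.
   Equality of letters is decided classically, as X is an arbitrary type. *)
Definition letter_eq_dec (a b : X * bool) : {a = b} + {a <> b} :=
  excluded_middle_informative (a = b).

Definition letter_inv (a : X * bool) : X * bool := (fst a, negb (snd a)).

Lemma letter_inv_inv (a : X * bool) : letter_inv (letter_inv a) = a.
Proof. destruct a as [x b]; unfold letter_inv; simpl; rewrite Bool.negb_involutive; reflexivity. Qed.

Lemma letter_inv_neq (a : X * bool) : a <> letter_inv a.
Proof. destruct a as [x b]; unfold letter_inv; simpl; intro H; inversion H; destruct b; discriminate. Qed.

Lemma letter_inv_sym (a b : X * bool) : a <> letter_inv b -> b <> letter_inv a.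
Proof. intros H E; apply H; rewrite E, letter_inv_inv; reflexivity. Qed.

Fixpoint reduced (w : list (X * bool)) : Prop :=
  match w with
  | [] => True
  | a :: w' => (match w' with [] => True | b :: _ => b <> letter_inv a end) /\ reduced w'
  end.

Definition cons_red (a : X * bool) (w : list (X * bool)) : list (X * bool) :=
  match w with
  | [] => [a]
  | b :: w' => if letter_eq_dec b (letter_inv a) then w' else a :: w
  end.

Definition word_mul (u v : list (X * bool)) : list (X * bool) := fold_right cons_red v u.
Definition word_inv (u : list (X * bool)) : list (X * bool) := rev (map letter_inv u).

Definition no_cancel (u v : list (X * bool)) : Prop :=
  forall x y u' v', u = u' ++ [x] -> v = y :: v' -> y <> letter_inv x.

Lemma cons_red_reduced a w : reduced w -> reduced (cons_red a w).
Proof.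
  destruct w as [|b w']; simpl; auto.
  intros [H1 H2]. destruct (letter_eq_dec b (letter_inv a)); simpl; auto.
Qed.

Lemma word_mul_reduced (u v : list (X * bool)) : reduced v -> reduced (word_mul u v).
Proof. induction u; simpl; auto. intros; apply cons_red_reduced; auto. Qed.

Lemma cons_red_nocancel a w : reduced (a :: w) -> cons_red a w = a :: w.
Proof.
  destruct w as [|b w']; simpl; auto.
  intros [H1 H2]. destruct (letter_eq_dec b (letter_inv a)); congruence.
Qed.

Lemma cons_red_cancel a w : reduced w -> cons_red a (cons_red (letter_inv a) w) = w.
Proof.
  destruct w as [|b w']; simpl.
  - intros _. destruct (letter_eq_dec (letter_inv a) (letter_inv a)); congruence.
  - intros [H1 H2]. destruct (letter_eq_dec b (letter_inv (letter_inv a))) as [E|E].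
    + rewrite letter_inv_inv in E. subst b. destruct w' as [|c w'']; simpl; auto.
      destruct (letter_eq_dec c (letter_inv a)); congruence.
    + simpl. destruct (letter_eq_dec (letter_inv a) (letter_inv a)); congruence.
Qed.

Lemma word_mul_cons_red a u v : reduced v ->
  word_mul (cons_red a u) v = cons_red a (word_mul u v).
Proof.
  intros Hv. destruct u as [|b u']; simpl; auto.
  destruct (letter_eq_dec b (letter_inv a)) as [E|E]; simpl; auto.
  subst b. rewrite cons_red_cancel; auto. apply word_mul_reduced; auto.
Qed.

Lemma word_mul_assoc (u w v : list (X * bool)) : reduced v ->
  word_mul (word_mul u w) v = word_mul u (word_mul w v).
Proof.
  intros Hv; induction u; simpl; auto.
  rewrite word_mul_cons_red; auto. rewrite IHu; auto.
Qed.

Lemma word_mul_app (u1 u2 v : list (X * bool)) :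
  word_mul (u1 ++ u2) v = word_mul u1 (word_mul u2 v).
Proof. unfold word_mul; apply fold_right_app. Qed.

Lemma word_inv_cons a u : word_inv (a :: u) = word_inv u ++ [letter_inv a].
Proof. reflexivity. Qed.

Lemma word_inv_snoc a u : word_inv (u ++ [a]) = letter_inv a :: word_inv u.
Proof. unfold word_inv; rewrite map_app, rev_app_distr; reflexivity. Qed.

Lemma word_inv_inv (u : list (X * bool)) : word_inv (word_inv u) = u.
Proof.
  unfold word_inv; rewrite map_rev, rev_involutive, map_map.
  erewrite map_ext; [apply map_id|]. intro; apply letter_inv_inv.
Qed.

Lemma word_mul_invl (u : list (X * bool)) : word_mul (word_inv u) u = [].
Proof.
  induction u as [|a u IH]; simpl; auto.
  rewrite word_inv_cons, word_mul_app. simpl.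
  destruct (letter_eq_dec a (letter_inv (letter_inv a))) as [_|E]; [exact IH|].
  exfalso; apply E; rewrite letter_inv_inv; auto.
Qed.

Lemma word_mul_invr (u : list (X * bool)) : word_mul u (word_inv u) = [].
Proof. rewrite <- (word_inv_inv u) at 1. apply word_mul_invl. Qed.

Lemma word_mul_nil_r (u : list (X * bool)) : reduced u -> word_mul u [] = u.
Proof.
  induction u as [|a u IH]; simpl; auto.
  intros H. rewrite IH by (destruct H; auto). apply cons_red_nocancel; auto.
Qed.

Lemma reduced_app (u v : list (X * bool)) : reduced u -> reduced v -> no_cancel u v ->
  reduced (u ++ v).
Proof.
  induction u as [|a u IH]; simpl; auto.
  intros [H1 H2] Hv Hc. split.
  - destruct u as [|b u'].
    + simpl. destruct v as [|y v']; auto. apply (Hc a y [] v'); auto.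
    + simpl. exact H1.
  - apply IH; auto. intros x y u' v' E1 E2. apply (Hc x y (a :: u') v'); subst; auto.
Qed.

Lemma reduced_app_inv (u v : list (X * bool)) : reduced (u ++ v) -> reduced u /\ reduced v.
Proof.
  induction u as [|a u IH]; simpl; auto.
  intros [H1 H2]. destruct (IH H2) as [A B]. split; auto. split; auto.
  destruct u; simpl in *; auto.
Qed.

Lemma word_mul_app_reduced (u v : list (X * bool)) : reduced (u ++ v) -> word_mul u v = u ++ v.
Proof.
  induction u as [|a u IH]; simpl; auto.
  intros H. rewrite IH by (destruct H; auto). apply cons_red_nocancel; auto.
Qed.

Lemma word_mul_no_cancel (u v : list (X * bool)) : reduced u -> reduced v -> no_cancel u v ->
  word_mul u v = u ++ v.
Proof. intros; apply word_mul_app_reduced, reduced_app; auto. Qed.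

Lemma not_no_cancel (u v : list (X * bool)) : ~ no_cancel u v ->
  exists u' x v', u = u' ++ [x] /\ v = letter_inv x :: v'.
Proof.
  intros H. apply NNPP; intros Hn. apply H. intros x y u' v' E1 E2 E3.
  apply Hn. exists u', x, v'. subst; auto.
Qed.

Lemma word_inv_reduced (u : list (X * bool)) : reduced u -> reduced (word_inv u).
Proof.
  induction u as [|a u IH]; [simpl; auto|].
  intros [H1 H2]. rewrite word_inv_cons. apply reduced_app; simpl; auto.
  intros x y u' v' E1 E2. inversion E2; subst y.
  destruct u as [|h u]; [destruct u'; discriminate|].
  rewrite word_inv_cons in E1. apply app_inj_tail in E1. destruct E1 as [_ <-].
  rewrite (letter_inv_inv h). intros F. apply H1. now symmetry.
Qed.

Lemma word_mul_length (u v : list (X * bool)) : length (word_mul u v) <= length u + length v.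
Proof.
  induction u as [|a u IH]; simpl; auto.
  destruct (word_mul u v) as [|b w]; simpl in *; [lia|].
  destruct (letter_eq_dec b (letter_inv a)); simpl; lia.
Qed.

Lemma word_mul_cancel_length (u' v' : list (X * bool)) x :
  length (word_mul (u' ++ [x]) (letter_inv x :: v')) < length u' + length v' + 2.
Proof.
  rewrite word_mul_app. simpl. destruct (letter_eq_dec (letter_inv x) (letter_inv x)); [|congruence].
  pose proof (word_mul_length u' v'). lia.
Qed.

(* Among commuting reduced words, absence of cancellation is symmetric: a
   one-sided cancellation would make one product shorter than the other. *)
Lemma no_cancel_comm_sym (u v : list (X * bool)) : reduced u -> reduced v ->
  word_mul u v = word_mul v u -> no_cancel u v -> no_cancel v u.
Proof.
  intros Hu Hv E Huv. apply NNPP; intros Hvu.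
  destruct (not_no_cancel _ _ Hvu) as [v' [x [u' [Ev Eu]]]].
  rewrite (word_mul_no_cancel _ _ Hu Hv Huv) in E.
  pose proof (word_mul_cancel_length v' u' x) as L. rewrite <- Ev, <- Eu, <- E in L.
  rewrite length_app, Ev, Eu, length_app in L. simpl in L. lia.
Qed.

Definition cyc_reduced (c : list (X * bool)) : Prop :=
  exists a b c1 c2, c = a :: c1 /\ c = c2 ++ [b] /\ b <> letter_inv a.

Lemma concat_comm_last (l c c2 : list (X * bool)) b : l <> [] -> l ++ c = c ++ l ->
  c = c2 ++ [b] -> exists l', l = l' ++ [b].
Proof.
  intros Hl H Ec. destruct (exists_last Hl) as [l0 [y El]]. subst l c.
  rewrite !app_assoc in H. apply app_inj_tail in H. destruct H; subst; eauto.
Qed.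

(* Two words commuting with a cyclically reduced c in the free monoid have
   no cancellation between them: the first ends like c, the second starts
   like c. *)
Lemma concat_comm_no_cancel (c p q : list (X * bool)) : cyc_reduced c ->
  p ++ c = c ++ p -> q ++ c = c ++ q -> no_cancel p q.
Proof.
  intros [a [b [c1 [c2 [Ec1 [Ec2 Hb]]]]]] Hp Hq x y p' q' Ep Eq.
  assert (Lp : p <> []) by (rewrite Ep; destruct p'; discriminate).
  destruct (concat_comm_last _ _ _ _ Lp Hp Ec2) as [l' El]. rewrite Ep in El.
  apply app_inj_tail in El. destruct El as [_ ->].
  rewrite Eq, Ec1 in Hq. simpl in Hq. inversion Hq; subst.
  apply letter_inv_sym; auto.
Qed.

Lemma same_ends_no_cancel (u c u1 u2 c1 c2 : list (X * bool)) a b :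
  u = a :: u1 -> u = u2 ++ [b] -> c = a :: c1 -> c = c2 ++ [b] -> b <> letter_inv a ->
  no_cancel u c /\ no_cancel c u.
Proof.
  intros Eu1 Eu2 Ec1 Ec2 Hb.
  split; intros x y p q Ep Eq.
  - rewrite Ep in Eu2; rewrite Eq in Ec1. apply app_inj_tail in Eu2. inversion Ec1.
    destruct Eu2; subst. now apply letter_inv_sym.
  - rewrite Ep in Ec2; rewrite Eq in Eu1. apply app_inj_tail in Ec2. inversion Eu1.
    destruct Ec2; subst. now apply letter_inv_sym.
Qed.

End ReducedWords.

Definition rword (X : Type) : Type := {w : list (X * bool) | reduced w}.

Lemma rword_eq {X} (u v : rword X) : proj1_sig u = proj1_sig v -> u = v.
Proof.
  destruct u as [u hu], v as [v hv]; simpl; intros E; subst v.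
  f_equal; apply proof_irrelevance.
Qed.

Definition rword_mul {X} (u v : rword X) : rword X :=
  exist _ (word_mul (proj1_sig u) (proj1_sig v)) (word_mul_reduced _ _ (proj2_sig v)).
Definition rword_one {X} : rword X := exist _ [] I.
Definition rword_inv {X} (u : rword X) : rword X :=
  exist _ (word_inv (proj1_sig u)) (word_inv_reduced _ (proj2_sig u)).

Definition FreeWords (X : Type) : Group.
Proof.
  refine (@Build_Group (rword X) rword_mul rword_one rword_inv _ _ _ _ _).
  - intros x y z; apply rword_eq; simpl. symmetry; apply word_mul_assoc, proj2_sig.
  - intros x; apply rword_eq; reflexivity.
  - intros x; apply rword_eq; simpl. apply word_mul_nil_r, proj2_sig.
  - intros x; apply rword_eq; simpl. apply word_mul_invl.
  - intros x; apply rword_eq; simpl. apply word_mul_invr.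
Defined.

Definition wval {X} (u : FreeWords X) : list (X * bool) := proj1_sig (u : rword X).

Lemma wval_mul {X} (u v : FreeWords X) : wval (gmul u v) = word_mul (wval u) (wval v).
Proof. reflexivity. Qed.
Lemma wval_inv {X} (u : FreeWords X) : wval (ginv u) = word_inv (wval u).
Proof. reflexivity. Qed.
Lemma wval_reduced {X} (u : FreeWords X) : reduced (wval u).
Proof. exact (proj2_sig (u : rword X)). Qed.
Lemma wval_inj {X} (u v : FreeWords X) : wval u = wval v -> u = v.
Proof. apply rword_eq. Qed.

Lemma concat_comm_of_no_cancel {X} (u v : FreeWords X) :
  no_cancel (wval u) (wval v) -> no_cancel (wval v) (wval u) -> comm u v ->
  wval u ++ wval v = wval v ++ wval u.
Proof.
  intros N1 N2 H. apply (f_equal wval) in H. rewrite !wval_mul in H.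
  rewrite <- !word_mul_no_cancel by (apply wval_reduced || assumption). exact H.
Qed.

(* Either no cancellation occurs in C A (and then neither in A C),
   or cancellation occurs on both sides, and then A^-1 begins and ends like C. *)
Lemma comm_cyc_reduced_concat {X} (C A : FreeWords X) : cyc_reduced (wval C) -> comm C A ->
  exists A2, (A2 = A \/ A2 = ginv A) /\ wval A2 ++ wval C = wval C ++ wval A2.
Proof.
  intros HC HCA.
  pose proof (wval_reduced C) as RC; pose proof (wval_reduced A) as RA.
  assert (Hw : word_mul (wval C) (wval A) = word_mul (wval A) (wval C)) by exact (f_equal wval HCA).
  destruct (classic (no_cancel (wval C) (wval A))) as [N1|N1].
  - exists A. split; [now left |]. symmetry.
    apply concat_comm_of_no_cancel; auto. now apply no_cancel_comm_sym.
  - assert (N2 : ~ no_cancel (wval A) (wval C)).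
    { intros N2. apply N1. now apply no_cancel_comm_sym. }
    destruct (not_no_cancel _ _ N1) as [c' [x [a' [EC EA]]]].
    destruct (not_no_cancel _ _ N2) as [a'' [y [c'' [EA' EC']]]].
    assert (I1 : wval (ginv A) = letter_inv y :: word_inv a'')
      by (rewrite wval_inv, EA'; apply word_inv_snoc).
    assert (I2 : wval (ginv A) = word_inv a' ++ [x]).
    { rewrite wval_inv, EA, word_inv_cons. f_equal. now rewrite (letter_inv_inv x). }
    assert (Hxy : x <> letter_inv (letter_inv y)).
    { destruct HC as [a1 [b [c1 [c2 [Ec1 [Ec2 Hb]]]]]].
      rewrite Ec1 in EC'; rewrite Ec2 in EC. apply app_inj_tail in EC.
      inversion EC'. destruct EC; subst; auto. }
    destruct (same_ends_no_cancel _ _ _ _ _ _ _ _ I1 I2 EC' EC Hxy) as [N3 N4].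
    exists (ginv A). split; [now right |].
    apply concat_comm_of_no_cancel; auto. apply comm_sym, comm_inv, HCA.
Qed.

Lemma concat_comm_group_comm {X} (C P Q : FreeWords X) : cyc_reduced (wval C) ->
  wval P ++ wval C = wval C ++ wval P -> wval Q ++ wval C = wval C ++ wval Q -> comm P Q.
Proof.
  intros HC HP HQ. apply wval_inj. rewrite !wval_mul.
  assert (Hc : wval C <> []).
  { destruct HC as [a [b [c1 [c2 [E _]]]]]. rewrite E; discriminate. }
  rewrite (word_mul_no_cancel (wval P)), (word_mul_no_cancel (wval Q))
    by (apply wval_reduced || exact (concat_comm_no_cancel _ _ _ HC HQ HP)
        || exact (concat_comm_no_cancel _ _ _ HC HP HQ)).
  exact (monoid_comm_transitive _ _ _ Hc HP HQ).
Qed.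

Definition letter_elt {X} (a : X * bool) : FreeWords X := exist _ [a] (conj I I).

(* Cyclic reduction: every non-trivial element is conjugate to a cyclically
   reduced one; strip matching letters off both ends, by induction on length. *)
Lemma cyc_reduced_conjugate {X} : forall n (Z : FreeWords X), length (wval Z) <= n ->
  wval Z <> [] -> exists U C, cyc_reduced (wval C) /\ Z = gmul U (gmul C (ginv U)).
Proof.
  induction n as [|n IH]; intros Z Hl Hn.
  { destruct (wval Z); simpl in Hl; [congruence | lia]. }
  pose proof (wval_reduced Z) as RZ.
  destruct (wval Z) as [|a z1] eqn:Ez; [congruence|].
  destruct z1 as [|c z1'].
  { exists gone, Z. split; [|apply conjugate_by_one].
    rewrite Ez. exists a, a, [], []. repeat split; auto. apply letter_inv_neq. }
  destruct (exists_last (l := c :: z1') ltac:(discriminate)) as [m [b Em]].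
  rewrite Em in Ez, RZ, Hl.
  destruct (letter_eq_dec b (letter_inv a)) as [Eb|Eb].
  2:{ exists gone, Z. split; [|apply conjugate_by_one].
      rewrite Ez. exists a, b, (m ++ [b]), (a :: m). repeat split; auto. }
  subst b.
  assert (Rm : reduced m).
  { destruct RZ as [_ R2]. apply reduced_app_inv in R2. tauto. }
  assert (Hm : m <> []).
  { intro E; subst m. simpl in RZ. destruct RZ as [F _]. apply F; auto. }
  destruct (IH (exist _ m Rm : rword X)) as [U' [C [HC EM]]]; auto.
  { simpl in Hl |- *. rewrite length_app in Hl. simpl in Hl. lia. }
  exists (gmul (letter_elt a) U'), C. split; auto.
  rewrite <- conjugate_conjugate, <- EM.
  apply wval_inj. rewrite Ez, !wval_mul, wval_inv. simpl wval at 2 3.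
  unfold word_inv; simpl. rewrite word_mul_app_reduced.
  - symmetry; apply cons_red_nocancel; exact RZ.
  - destruct RZ as [_ R2]; exact R2.
Qed.

Lemma free_words_comm_transitive (X : Type) : comm_transitive (FreeWords X).
Proof.
  intros Z A B Hz HA HB.
  assert (Hz' : wval Z <> []) by (intros E; apply Hz, wval_inj, E).
  destruct (cyc_reduced_conjugate _ Z (le_n _) Hz') as [U [C [HC EZ]]].
  assert (HZC : forall D, comm Z D -> comm C (conjg U D)).
  { intros D HD. rewrite <- (conjg_conjugate _ U C), <- EZ. now apply comm_conjg_iff. }
  destruct (comm_cyc_reduced_concat _ _ HC (HZC A HA)) as [A2 [OA LA]].
  destruct (comm_cyc_reduced_concat _ _ HC (HZC B HB)) as [B2 [OB LB]].
  pose proof (concat_comm_group_comm _ _ _ HC LA LB) as HAB.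
  apply (comm_conjg_iff _ U).
  destruct OA as [-> | ->]; destruct OB as [-> | ->];
    rewrite ?comm_inv_iff_l, ?comm_inv_iff in HAB; exact HAB.
Qed.

Fixpoint eval_word {F : Group} {X} (i : X -> F) (w : list (X * bool)) : F :=
  match w with
  | [] => gone
  | a :: w' => gmul (if snd a then i (fst a) else ginv (i (fst a))) (eval_word i w')
  end.

Lemma eval_cons_red {F : Group} {X} (i : X -> F) a w :
  eval_word i (cons_red a w) = gmul (if snd a then i (fst a) else ginv (i (fst a))) (eval_word i w).
Proof.
  destruct w as [|b w']; simpl; auto.
  destruct (letter_eq_dec b (letter_inv a)) as [E|E]; simpl; auto.
  subst b. destruct a as [x [|]]; simpl; rewrite gmul_assoc;
    [rewrite gmul_Vr | rewrite gmul_Vl]; rewrite gmul_1l; auto.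
Qed.

Lemma eval_word_mul {F : Group} {X} (i : X -> F) u v :
  eval_word i (word_mul u v) = gmul (eval_word i u) (eval_word i v).
Proof.
  induction u as [|a u IH]; simpl. rewrite gmul_1l; auto.
  rewrite eval_cons_red, IH, gmul_assoc; auto.
Qed.

Definition eval_hom {F : Group} {X} (i : X -> F) : Hom (FreeWords X) F :=
  {| hmap := fun w => eval_word i (wval w); hmap_mul := fun u v => eval_word_mul i _ _ |}.

(* A group free on X embeds in the group of reduced words on X: the
   homomorphism sending each basis element to its one-letter word has the
   evaluation map as a left inverse. *)
Lemma free_embeds (F : Group) (X : Type) (i : X -> F) : is_free_on F X i ->
  exists phi : Hom F (FreeWords X), forall y, eval_hom i (phi y) = y.
Proof.
  intros Hf.
  destruct (Hf (FreeWords X) (fun x => letter_elt (x, true))) as [phi [Hphi _]].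
  destruct (Hf F i) as [phi0 [_ Huniq]].
  exists phi. intros y. transitivity (phi0 y).
  - apply (Huniq (compHom (eval_hom i) phi)). intros x. simpl. rewrite Hphi. apply gmul_1r.
  - symmetry; apply (Huniq (idHom F)). reflexivity.
Qed.

Lemma free_comm_transitive (F : Group) (X : Type) (i : X -> F) :
  is_free_on F X i -> comm_transitive F.
Proof.
  intros Hf. destruct (free_embeds F X i Hf) as [phi Hphi].
  apply (comm_transitive_inj F (FreeWords X) phi); [|apply free_words_comm_transitive].
  intros x y E. now rewrite <- (Hphi x), <- (Hphi y), E.
Qed.

Lemma abelian_image_comm {G F : Group} (phi : Hom G F) :
  ~ nonab_image phi -> forall x y, comm (phi x) (phi y).
Proof. intros H x y. apply NNPP; intro E. apply H. exists x, y; auto. Qed.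

Lemma central_in_nonab_image {G F : Group} (hF : comm_transitive F)
    (phi : Hom G F) (g : G) :
  nonab_image phi -> (forall h, comm (phi g) (phi h)) -> phi g = gone.
Proof.
  intros [x [y Hxy]] Hg. apply NNPP; intros Hne. exact (Hxy (hF _ _ _ Hne (Hg x) (Hg y))).
Qed.

Section ResidualFreeness.
Variables G F : Group.
Hypothesis hF : comm_transitive F.

Lemma rf_map_mul (g h : G) : rf_map G F (gmul g h) = pmul (rf_map G F g) (rf_map G F h).
Proof. apply functional_extensionality; intro phi. apply hmap_mul. Qed.

Definition rf_central (g : G) : Prop :=
  forall h : G, pmul (rf_map G F g) (rf_map G F h) = pmul (rf_map G F h) (rf_map G F g).

(* Coordinates at homomorphisms
   with abelian image commute automatically; at the others, CT of F applies. *)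
Lemma rfna_trivial_iff_central (g : G) : rfna_map G F g = pone <-> rf_central g.
Proof.
  split.
  - intros Hg h. apply functional_extensionality; intro phi. unfold pmul, rf_map.
    destruct (classic (nonab_image phi)) as [Hn|Hn].
    + change (phi g) with (rfna_map G F g (exist _ phi Hn)).
      rewrite Hg; unfold pone. now rewrite gmul_1l, gmul_1r.
    + now apply abelian_image_comm.
  - intros Hg. apply functional_extensionality; intros [phi Hn].
    apply (central_in_nonab_image hF); auto.
    intros h. exact (equal_f (Hg h) phi).
Qed.

Lemma rf_proj_onto (y : nonabHom G F -> F) :
  in_RFna G F y -> exists x, in_RF G F x /\ rf_proj G F x = y.
Proof. intros [g ->]. exists (rf_map G F g). split; [exists g |]; reflexivity. Qed.

Lemma rf_proj_kernel (x : Hom G F -> F) :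
  in_RF G F x -> (rf_proj G F x = pone <-> in_Z_RF G F x).
Proof.
  intros [g ->]. change (rf_proj G F (rf_map G F g)) with (rfna_map G F g).
  rewrite rfna_trivial_iff_central. unfold in_Z_RF. split.
  - intros Hc. split; [exists g; reflexivity |]. intros y [h ->]. apply Hc.
  - intros [_ Hc] h. apply Hc. exists h; reflexivity.
Qed.

Lemma rfna_map_div (g h : G) :
  rfna_map G F g = rfna_map G F h -> rfna_map G F (gmul g (ginv h)) = pone.
Proof.
  intros E. apply functional_extensionality; intros p. unfold rfna_map, pone.
  rewrite hmap_mul, hom_inv. change (proj1_sig p g) with (rfna_map G F g p).
  now rewrite E, gmul_Vr.
Qed.

Lemma residually_nonab_free_iff :
  residually_nonab_free G F <-> residually_free G F /\ trivial_center G.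
Proof.
  split.
  - intros Hna. split.
    + intros g h E. apply Hna. apply functional_extensionality; intros p. exact (equal_f E _).
    + intros z Hz. apply Hna. transitivity (@pone (nonabHom G F) F).
      * apply rfna_trivial_iff_central. intros h. now rewrite <- !rf_map_mul, Hz.
      * apply functional_extensionality; intros p. symmetry; apply hom_one.
  - intros [Hrf Hz] g h E.
    assert (Hd : gmul g (ginv h) = gone).
    { pose proof (proj1 (rfna_trivial_iff_central _) (rfna_map_div _ _ E)) as Hc.
      apply Hz. intros k. apply Hrf. rewrite (rf_map_mul _ k), (rf_map_mul k). apply Hc. }
    apply (g_cancel_r G (ginv h)). now rewrite Hd, gmul_Vr.
Qed.

End ResidualFreeness.

Theorem mainTheorem4 (F : Group) (hF : nonabelian_free F)
    (G : Group) (hG : finitely_generated G) :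
  (* exactness of 1 -> Z(RF(G)) -> RF(G) -> RF_na(G) -> 1 *)
  ((forall y, in_RFna G F y -> exists x, in_RF G F x /\ rf_proj G F x = y) /\
   (forall x, in_RF G F x -> (rf_proj G F x = pone <-> in_Z_RF G F x))) /\
  (residually_nonab_free G F <-> residually_free G F /\ trivial_center G).
Proof.
  destruct hF as [[X [i Hfree]] _].
  pose proof (free_comm_transitive F X i Hfree) as hCT.
  split; [split |].
  - apply rf_proj_onto.
  - apply rf_proj_kernel, hCT.
  - apply residually_nonab_free_iff, hCT.
Qed.
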